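(* Let \(X\) be a nonempty set, let \((Q, \preccurlyeq_Q)\) be a poset with smallest element \(q_0\), and let \(d \colon X^2 \to Q\) be a \(Q\)-pseudoultrametric on \(X\). Then \(d^{-1}(q_0)=\{\langle x,y\rangle\in X^2: d(x,y)=q_0\}\) is an equivalence relation on \(X\) and \(d\) is \(q_0\)-coherent.
   Context: A mapping \(d\colon X^2\to Q\) is a \(Q\)-pseudoultrametric if \(d\) is symmetric, \(d(x,x)=q_0\) for all \(x\in X\), and for every triple \(\langle x_1,x_2,x_3\rangle\) of points of \(X\) there is a permutation \((i_1,i_2,i_3)\) of \((1,2,3)\) with \(d(x_{i_1},x_{i_3})\preccurlyeq_Q d(x_{i_1},x_{i_2})\) and \(d(x_{i_1},x_{i_2})=d(x_{i_2},x_{i_3})\). A mapping \(\Phi\) with domain \(X^2\) is strongly consistent with an equivalence relation \(R\) on \(X\) if \(\langle x_1,x_2\rangle\in R\) and \(\langle x_3,x_4\rangle\in R\) imply \(\Phi(x_1,x_3)=\Phi(x_2,x_4)\); for \(a_0\) in the range of \(\Phi\), \(\Phi\) is \(a_0\)-coherent if the fiber \(\Phi^{-1}(a_0)\) is an equivalence relation on \(X\) and \(\Phi\) is strongly consistent with it. *)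

From Stdlib Require Import RelationClasses.

Definition is_poset {Q : Type} (le : Q -> Q -> Prop) : Prop :=
  (forall a, le a a) /\
  (forall a b, le a b -> le b a -> a = b) /\
  (forall a b c, le a b -> le b c -> le a c).

Definition is_smallest {Q : Type} (le : Q -> Q -> Prop) (q0 : Q) : Prop :=
  forall q, le q0 q.

Definition Q_pseudoultrametric {X Q : Type} (le : Q -> Q -> Prop) (q0 : Q)
    (d : X -> X -> Q) : Prop :=
  (forall x y, d x y = d y x) /\
  (forall x, d x x = q0) /\
  (forall x1 x2 x3 : X,
     exists y1 y2 y3 : X,
       (* (y1,y2,y3) is a permutation of (x1,x2,x3) *)
       ((y1 = x1 /\ y2 = x2 /\ y3 = x3) \/ (y1 = x1 /\ y2 = x3 /\ y3 = x2) \/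
        (y1 = x2 /\ y2 = x1 /\ y3 = x3) \/ (y1 = x2 /\ y2 = x3 /\ y3 = x1) \/
        (y1 = x3 /\ y2 = x1 /\ y3 = x2) \/ (y1 = x3 /\ y2 = x2 /\ y3 = x1)) /\
       le (d y1 y3) (d y1 y2) /\ d y1 y2 = d y2 y3).

Definition is_equivalence {X : Type} (R : X -> X -> Prop) : Prop :=
  (forall x, R x x) /\ (forall x y, R x y -> R y x) /\
  (forall x y z, R x y -> R y z -> R x z).

Definition strongly_consistent {X A : Type} (Phi : X -> X -> A)
    (R : X -> X -> Prop) : Prop :=
  forall x1 x2 x3 x4, R x1 x2 -> R x3 x4 -> Phi x1 x3 = Phi x2 x4.

Definition fiber {X A : Type} (Phi : X -> X -> A) (a0 : A) : X -> X -> Prop :=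
  fun x y => Phi x y = a0.

Definition coherent {X A : Type} (Phi : X -> X -> A) (a0 : A) : Prop :=
  (exists x y, Phi x y = a0) /\
  is_equivalence (fiber Phi a0) /\ strongly_consistent Phi (fiber Phi a0).

(** In a triangle of a Q-pseudoultrametric every side is bounded by one of
    the other two.  If [d x y] is the least value [q0], this forces
    [d x z] and [d y z] to bound each other (or both to collapse to [q0]),
    so points at distance [q0] are indistinguishable for [d]. *)


Section Pseudoultrametric.

Variables (X Q : Type) (le : Q -> Q -> Prop) (q0 : Q) (d : X -> X -> Q).

Hypothesis le_refl : forall q, le q q.
Hypothesis d_sym : forall x y, d x y = d y x.
Hypothesis d_triangle : forall x1 x2 x3 : X,
  exists y1 y2 y3 : X,
    ((y1 = x1 /\ y2 = x2 /\ y3 = x3) \/ (y1 = x1 /\ y2 = x3 /\ y3 = x2) \/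
     (y1 = x2 /\ y2 = x1 /\ y3 = x3) \/ (y1 = x2 /\ y2 = x3 /\ y3 = x1) \/
     (y1 = x3 /\ y2 = x1 /\ y3 = x2) \/ (y1 = x3 /\ y2 = x2 /\ y3 = x1)) /\
    le (d y1 y3) (d y1 y2) /\ d y1 y2 = d y2 y3.

Lemma dist_le_one_of_others (x y z : X) :
  le (d x z) (d x y) \/ le (d x z) (d y z).
Proof.
  pose proof (d_sym x y); pose proof (d_sym x z); pose proof (d_sym y z).
  pose proof (le_refl (d x z)).
  destruct (d_triangle x y z) as (y1 & y2 & y3 & Hperm & Hle & Heq).
  destruct Hperm as [(-> & -> & ->) | [(-> & -> & ->) | [(-> & -> & ->) |
                    [(-> & -> & ->) | [(-> & -> & ->) | (-> & -> & ->)]]]]];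
    first [left; congruence | right; congruence].
Qed.

Hypothesis le_antisym : forall a b, le a b -> le b a -> a = b.
Hypothesis q0_smallest : forall q, le q0 q.

Lemma le_q0_eq (q : Q) : le q q0 -> q = q0.
Proof. intro H; exact (le_antisym _ _ H (q0_smallest q)). Qed.

Lemma dist_congr_q0 (x y z : X) : d x y = q0 -> d x z = d y z.
Proof.
  intro Hxy.
  destruct (dist_le_one_of_others x y z) as [Hxz | Hxz];
    destruct (dist_le_one_of_others y x z) as [Hyz | Hyz].
  - rewrite Hxy in Hxz; rewrite (d_sym y x), Hxy in Hyz.
    now rewrite (le_q0_eq _ Hxz), (le_q0_eq _ Hyz).
  - rewrite Hxy in Hxz; rewrite (le_q0_eq _ Hxz) in Hyz |- *.
    now rewrite (le_q0_eq _ Hyz).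
  - rewrite (d_sym y x), Hxy in Hyz; rewrite (le_q0_eq _ Hyz) in Hxz |- *.
    now rewrite (le_q0_eq _ Hxz).
  - now apply le_antisym.
Qed.

Hypothesis d_refl : forall x, d x x = q0.

Lemma fiber_q0_equivalence : is_equivalence (fiber d q0).
Proof.
  unfold fiber; split; [exact d_refl | split].
  - intros x y Hxy; now rewrite d_sym.
  - intros x y z Hxy Hyz; now rewrite (dist_congr_q0 x y z Hxy).
Qed.

Lemma fiber_q0_strongly_consistent : strongly_consistent d (fiber d q0).
Proof.
  intros x1 x2 x3 x4 H12 H34; unfold fiber in *.
  rewrite (dist_congr_q0 x1 x2 x3 H12), (d_sym x2 x3), (d_sym x2 x4).
  exact (dist_congr_q0 x3 x4 x2 H34).
Qed.

End Pseudoultrametric.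

Theorem proposition3p16 (X Q : Type) (le : Q -> Q -> Prop) (q0 : Q)
  (d : X -> X -> Q) :
  inhabited X ->
  is_poset le ->
  is_smallest le q0 ->
  Q_pseudoultrametric le q0 d ->
  is_equivalence (fiber d q0) /\ coherent d q0.
Proof.
  intros [x0] (le_refl & le_antisym & _) q0_smallest (d_sym & d_refl & d_triangle).
  assert (Hequiv := fiber_q0_equivalence X Q le q0 d
                      le_refl d_sym d_triangle le_antisym q0_smallest d_refl).
  split; [exact Hequiv | split; [| split]].
  - exists x0, x0; apply d_refl.
  - exact Hequiv.
  - exact (fiber_q0_strongly_consistent X Q le q0 d
             le_refl d_sym d_triangle le_antisym q0_smallest).
Qed.
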